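(* Under the network setting of the context, after a suitable relabeling of the classes $\mathcal I$, there exist a lower-triangular matrix $B_1\in\mathbb R^{I\times I}$ with strictly positive diagonal entries and a matrix $B_2\in\mathbb R^{I\times J}$ such that for all $x\in\mathbb R^I$ and $u=(u^c,u^s)\in\mathbb U$, $$b(x,u)=-B_1\big(x-(e\cdot x)^+u^c\big)+(e\cdot x)^-B_2u^s-(e\cdot x)^+\Gamma u^c+\ell,$$ where $\Gamma=\operatorname{diag}(\gamma_1,\dots,\gamma_I)$.
   Context: Network setting. Let $\mathcal I=\{1,\dots,I\}$ (customer classes), $\mathcal J=\{1,\dots,J\}$ (server pools), and let $\mathcal G$ be a bipartite graph on $\mathcal I\cup\mathcal J$ with edge set $\mathcal E\subset\mathcal I\times\mathcal J$ (write $i\sim j$ if $(i,j)\in\mathcal E$) which is a tree; $\mathcal J(i)=\{j:i\sim j\}$. Given constants $\lambda_i>0$, $\gamma_i\ge0$, $\ell_i\in\mathbb R$ for $i\in\mathcal I$, and $\mu_{ij}>0$ if $i\sim j$, $\mu_{ij}=0$ otherwise. $e$ denotes the all-ones vector, $a^+=\max(a,0)$, $a^-=-\min(a,0)$. For $(\alpha,\beta)\in\mathbb R^I\times\mathbb R^J$ with $e\cdot\alpha=e\cdot\beta$, $G(\alpha,\beta)$ is the unique matrix $\psi\in\mathbb R^{I\times J}$ with $\sum_j\psi_{ij}=\alpha_i$ for all $i$, $\sum_i\psi_{ij}=\beta_j$ for all $j$, and $\psi_{ij}=0$ whenever $i\not\sim j$ (existence and uniqueness hold since $\mathcal G$ is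 a tree). Action set $\mathbb U=\{u=(u^c,u^s)\in\mathbb R^I_+\times\mathbb R^J_+: e\cdot u^c=e\cdot u^s=1\}$. For $x\in\mathbb R^I$, $u\in\mathbb U$: $\hat G[u](x)=G\big(x-(e\cdot x)^+u^c,\,-(e\cdot x)^-u^s\big)$ and the drift $b_i(x,u)=-\sum_{j\in\mathcal J(i)}\mu_{ij}\hat G_{ij}[u](x)-\gamma_i(e\cdot x)^+u^c_i+\ell_i$, $i\in\mathcal I$. *)

From HB Require Import structures.
From mathcomp Require Import all_boot all_order all_algebra.
From Stdlib Require Import ClassicalEpsilon.
Set Implicit Arguments. Unset Strict Implicit. Unset Printing Implicit Defensive.
Import Order.TTheory GRing.Theory Num.Theory.
Local Open Scope ring_scope.

Section Network.
Variables (R : realFieldType) (nI nJ : nat).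

Definition gadj (E : 'I_nI -> 'I_nJ -> bool) : rel ('I_nI + 'I_nJ)%type :=
  fun v w => match v, w with
             | inl i, inr j => E i j
             | inr j, inl i => E i j
             | _, _ => false
             end.

Definition remove_edge (E : 'I_nI -> 'I_nJ -> bool) i0 j0 : 'I_nI -> 'I_nJ -> bool :=
  fun i j => E i j && ~~ ((i == i0) && (j == j0)).

(* Tree: connected and acyclic; acyclicity expressed as "every edge is a
   bridge" (an edge lies on no cycle iff its removal disconnects its ends). *)
Definition is_tree (E : 'I_nI -> 'I_nJ -> bool) : Prop :=
  (forall v w, connect (gadj E) v w) /\
  (forall i j, E i j -> ~~ connect (gadj (remove_edge E i j)) (inl i) (inr j)).

Definition esum n (x : 'cV[R]_n) : R := \sum_(k < n) x k 0.
Definition pospart (a : R) : R := Num.max a 0.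
Definition negpart (a : R) : R := - Num.min a 0.

Definition isG (E : 'I_nI -> 'I_nJ -> bool) (alpha : 'cV[R]_nI) (beta : 'cV[R]_nJ)
  (psi : 'M[R]_(nI, nJ)) : Prop :=
  (forall i, \sum_(j < nJ) psi i j = alpha i 0) /\
  (forall j, \sum_(i < nI) psi i j = beta j 0) /\
  (forall i j, ~~ E i j -> psi i j = 0).

(* G(alpha, beta): "the unique matrix" satisfying the constraints (definite
   description via Hilbert's epsilon). *)
Definition Gmat E (alpha : 'cV[R]_nI) (beta : 'cV[R]_nJ) : 'M[R]_(nI, nJ) :=
  epsilon (inhabits 0) (isG E alpha beta).

Definition inU (uc : 'cV[R]_nI) (us : 'cV[R]_nJ) : Prop :=
  (forall i, 0 <= uc i 0) /\ (forall j, 0 <= us j 0) /\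
  esum uc = 1 /\ esum us = 1.

Definition Ghat E (x uc : 'cV[R]_nI) (us : 'cV[R]_nJ) : 'M[R]_(nI, nJ) :=
  Gmat E (x - pospart (esum x) *: uc) (- (negpart (esum x) *: us)).

Definition drift E (mu : 'M[R]_(nI, nJ)) (gam ell : 'cV[R]_nI)
  (x uc : 'cV[R]_nI) (us : 'cV[R]_nJ) : 'cV[R]_nI :=
  \col_i (- (\sum_(j < nJ | E i j) mu i j * Ghat E x uc us i j)
          - gam i 0 * pospart (esum x) * uc i 0 + ell i 0).

End Network.

(* Hang the tree from a server pool r.  Flow conservation across an edge (i,j) shows that
   G(alpha, beta)_ij is the net supply of the component of i once (i,j) is deleted; since the
   total supply vanishes, this may be replaced, up to sign, by the supply of whichever side
   does not contain r.  Hence b(x,u)_i only involves alpha_k for classes k in the subtree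
   below i, so B1 is triangular once classes are ordered by the size of their subtrees, and
   its diagonal entry picks up mu_ij > 0 from the edge joining i to its parent. *)
From mathcomp Require Import all_boot all_order all_algebra all_fingroup.
From mathcomp Require Import ring lra.
From Stdlib Require Import ClassicalEpsilon.
Set Implicit Arguments. Unset Strict Implicit. Unset Printing Implicit Defensive.
Import Order.TTheory GRing.Theory Num.Theory.
Local Open Scope ring_scope.

Lemma exists_sorting_perm n (f : 'I_n -> nat) :
  exists s : {perm 'I_n}, forall a b : 'I_n, (a <= b)%N -> (f (s a) <= f (s b))%N.
Proof.
case: n f => [|m] f; first by exists 1%g => [[]].
pose leT a b := (f a <= f b)%N.
have leT_trans : transitive leT by move=> ? ? ?; apply: leq_trans.
have leT_total : total leT by move=> ? ?; apply: leq_total.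
pose l := sort leT (enum 'I_m.+1).
have size_l : size l = m.+1 by rewrite size_sort size_enum_ord.
have l_inj : injective (fun a : 'I_m.+1 => nth ord0 l a).
  move=> a b /eqP; rewrite nth_uniq ?size_l ?sort_uniq ?enum_uniq // => /eqP; exact: val_inj.
exists (perm l_inj) => a b ab; rewrite !permE.
apply: (sorted_leq_nth leT_trans (fun=> leqnn _) _ (sort_sorted leT_total _));
  by rewrite ?inE ?size_l.
Qed.

Section TreeCuts.
Variables (nI nJ : nat).
Local Notation V := ('I_nI + 'I_nJ)%type.
Implicit Types (E F : 'I_nI -> 'I_nJ -> bool) (i k : 'I_nI) (j : 'I_nJ) (v w : V).

Definition remove_class E k : 'I_nI -> 'I_nJ -> bool := fun i j => E i j && (i != k).

Lemma gadj_sym F : symmetric (gadj F).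
Proof. by move=> [i|j] [i'|j']. Qed.

Lemma connect_avoiding F F' k x p :
  (forall i j, i != k -> F i j -> F' i j) -> inl k \notin x :: p ->
  path (gadj F) x p -> connect (gadj F') x (last x p).
Proof.
move=> FF' kNp xp; apply/connectP; exists p => //.
have neq_k i : inl i \in predC1 (inl k : V) -> i != k by apply: contra => /eqP ->.
apply: (sub_in_path (P := predC1 (inl k : V))) xp; last by rewrite all_predC has_pred1.
by move=> [i|j] [i'|j'] //= Pv Pw; apply: FF'; apply: neq_k.
Qed.

Variables (E : 'I_nI -> 'I_nJ -> bool) (r : V).

(* The subtree rooted at k when the tree hangs from r. *)
Definition subtree k : pred V := fun v => ~~ connect (gadj (remove_class E k)) v r.

Lemma subtree_self k : r != inl k -> inl k \in subtree k.
Proof.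
move=> rNk; apply/negP => /connectP [[|w p] /=]; first by move=> _ rk; rewrite rk eqxx in rNk.
by case: w => [i|j] //=; rewrite /remove_class eqxx andbF.
Qed.

Lemma subtree_trans i k v : inl k \in subtree i -> v \in subtree k -> v \in subtree i.
Proof.
rewrite !unfold_in => kNr; apply: contra => /connectP [p].
case: (boolP (inl k \in v :: p)) => [/splitPl [p1 p2 k_end]|kNp] vp r_end.
  move: vp; rewrite cat_path => /andP [_ kp2]; move/negP: kNr; case.
  by rewrite r_end last_cat -k_end; apply/connectP; exists p2.
rewrite r_end; apply: connect_avoiding kNp vp => i' j ?.
by rewrite /remove_class => /andP [-> _].
Qed.

Lemma subtree_asym i k : is_tree E -> i != k -> inl k \in subtree i -> inl i \notin subtree k.
Proof.
move=> [connE _] iNk; rewrite !unfold_in negbK => kNr.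
have /connectP [p0 ip0 r_end] := connE (inl i) r.
case/shortenP: ip0 r_end => p ip uniq_ip _ r_end.
have avoid l i' j : i' != l -> E i' j -> remove_class E l i' j by move=> ? ?; apply/andP.
case: (boolP (inl k \in inl i :: p)) => [k_in|kNp].
  move: ip uniq_ip r_end; case/splitPl: k_in => p1 p2 k_end.
  rewrite cat_path /= mem_cat negb_or => /andP [_ kp2] /andP [/andP [_ iNp2] _] r_end.
  move/negP: kNr; case; rewrite r_end last_cat k_end.
  rewrite k_end in kp2; apply: connect_avoiding (avoid i) _ kp2.
  by rewrite in_cons negb_or iNp2 andbT; apply: contra iNk => /eqP [->].
by rewrite r_end; apply: connect_avoiding (avoid k) kNp ip.
Qed.

Lemma card_subtree_lt i k : is_tree E -> r != inl i -> i != k ->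
  inl k \in subtree i -> (#|subtree k| < #|subtree i|)%N.
Proof.
move=> treeE rNi iNk ki; apply/proper_card/properP; split.
  by apply/subsetP => v; apply: subtree_trans.
by exists (inl i); [apply: subtree_self | apply: subtree_asym].
Qed.

Definition side i j v := connect (gadj (remove_edge E i j)) (inl i) v.

Lemma side_parent_edge i : is_tree E -> r != inl i -> exists2 j, E i j & ~~ side i j r.
Proof.
move=> [connE bridgeE] rNi.
have /connectP [p0 ip0 r_end] := connE (inl i) r.
case/shortenP: ip0 r_end => [[|w p]] /=; first by move=> _ _ _ ri; rewrite ri eqxx in rNi.
case: w => [//|j] /andP [Eij jp] /andP [iNjp _] _ r_end; exists j => //.
apply: contra (bridgeE i j Eij) => i_r; apply: (connect_trans i_r).
rewrite (sym_connect_sym (gadj_sym _)) r_end; apply: connect_avoiding iNjp jp.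
by move=> i' j' i'Ni E'; rewrite /remove_edge E' (negbTE i'Ni).
Qed.

Lemma side_neq_root_subtree i j v : side i j v != side i j r -> v \in subtree i.
Proof.
apply: contraR; rewrite unfold_in negbK => v_r; apply/eqP.
apply: same_connect_r; first exact/sym_connect_sym/gadj_sym.
apply: connect_sub v_r => [[i'|j'] [i''|j'']] //=; rewrite /remove_class => /andP [E' Ni];
  apply: connect1; rewrite /= /remove_edge E' /=; by apply: contra Ni => /andP [/eqP ->].
Qed.

End TreeCuts.

Section Flows.
Variables (R : realFieldType) (nI nJ : nat) (E : 'I_nI -> 'I_nJ -> bool).
Local Notation V := ('I_nI + 'I_nJ)%type.
Implicit Types (psi phi : 'M[R]_(nI, nJ)) (alpha : 'cV[R]_nI) (beta : 'cV[R]_nJ).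

(* [isG E alpha beta psi] says that [netflow psi] is [alpha] on classes and [-beta] on pools. *)
Definition netflow psi (v : V) : R :=
  match v with inl i => \sum_j psi i j | inr j => - \sum_i psi i j end.

Definition supported psi := forall i j, ~~ E i j -> psi i j = 0.

Lemma netflowD psi phi v : netflow (psi + phi) v = netflow psi v + netflow phi v.
Proof.
case: v => [i|j] /=; last rewrite -opprD; rewrite -big_split; [|congr (- _)];
  by apply: eq_bigr => k _; rewrite mxE.
Qed.

Lemma netflowZ a psi v : netflow (a *: psi) v = a * netflow psi v.
Proof.
case: v => [i|j] /=; rewrite ?mulrN mulr_sumr; [|congr (- _)];
  by apply: eq_bigr => k _; rewrite mxE.
Qed.

Lemma netflow0 v : netflow 0 v = 0.
Proof. by case: v => [i|j] /=; rewrite big1 ?oppr0 // => k _; rewrite mxE. Qed.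

Lemma netflow_sum (I : finType) (F : I -> 'M[R]_(nI, nJ)) v :
  netflow (\sum_k F k) v = \sum_k netflow (F k) v.
Proof. exact: (big_morph (netflow^~ v) (fun psi phi => netflowD psi phi v) (netflow0 v)). Qed.

Lemma netflow_delta i j v : netflow (delta_mx i j) v = (inl i == v)%:R - (inr j == v)%:R.
Proof.
case: v => [k|l] /=.
  rewrite (bigD1 j) //= big1 => [|j' j'Nj]; last by rewrite mxE (negbTE j'Nj) andbF.
  by rewrite mxE eqxx andbT addr0 subr0 eq_sym.
rewrite (bigD1 i) //= big1 => [|i' i'Ni]; last by rewrite mxE (negbTE i'Ni).
by rewrite mxE eqxx addr0 sub0r eq_sym.
Qed.

Lemma edge_flow v w : gadj E v w ->
  exists2 psi, supported psi & forall u, netflow psi u = (v == u)%:R - (w == u)%:R.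
Proof.
have delta_supp i j : E i j -> supported (delta_mx i j).
  by move=> Eij a b; rewrite mxE; case: eqP => [->|] //; case: eqP => [->|] //; rewrite Eij.
case: v w => [i|j] [i'|j'] //= Eij.
  by exists (delta_mx i j'); [apply: delta_supp | apply: netflow_delta].
exists (- delta_mx i' j) => [a b nEab|u]; first by rewrite mxE delta_supp ?oppr0.
by rewrite -scaleN1r netflowZ netflow_delta mulN1r opprB.
Qed.

Lemma connect_flow v w : connect (gadj E) v w ->
  exists2 psi, supported psi & forall u, netflow psi u = (v == u)%:R - (w == u)%:R.
Proof.
case/connectP => p vp ->; elim: p v vp => [|x p IHp] v /=.
  by move=> _; exists 0 => [a b _|u]; rewrite ?mxE ?netflow0 ?subrr.
case/andP => /edge_flow [psi psi_supp psi_flow] /IHp [phi phi_supp phi_flow].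
exists (psi + phi) => [a b nEab|u]; first by rewrite mxE psi_supp ?phi_supp ?addr0.
by rewrite netflowD psi_flow phi_flow addrA subrK.
Qed.

(* Superpose unit flows from every vertex to a fixed vertex r, weighted by the supplies. *)
Lemma isG_exists (r : V) alpha beta :
  (forall v w, connect (gadj E) v w) -> esum alpha = esum beta ->
  exists psi, isG E alpha beta psi.
Proof.
move=> connE balanced.
pose supply (v : V) := match v with inl i => alpha i 0 | inr j => - beta j 0 end.
pose P v psi := supported psi /\ forall u, netflow psi u = (v == u)%:R - (r == u)%:R.
have flowP v : P v (epsilon (inhabits 0) (P v)).
  by apply: epsilon_spec; have [psi ? ?] := connect_flow (connE v r); exists psi.
pose psi := \sum_v supply v *: epsilon (inhabits 0) (P v).
have supply0 : \sum_v supply v = 0.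
  by rewrite big_sumType /= sumrN -!/(esum _) balanced subrr.
have psi_flow u : netflow psi u = supply u.
  rewrite netflow_sum; under eq_bigr => v _ do rewrite netflowZ (proj2 (flowP v)) mulrBr.
  rewrite sumrB -mulr_suml supply0 mul0r subr0 (bigD1 u) //= eqxx mulr1 big1 ?addr0 //.
  by move=> v /negbTE ->; rewrite mulr0.
exists psi; split; [|split].
- by move=> i; have := psi_flow (inl i).
- by move=> j; have := psi_flow (inr j) => /= /oppr_inj.
- move=> i j nEij; rewrite summxE big1 // => v _.
  by rewrite mxE (proj1 (flowP v)) ?mulr0.
Qed.

(* Summing the conservation laws over the side of i, the flow on every other edge cancels. *)
Lemma isG_bridge psi alpha beta i j : isG E alpha beta psi -> ~~ side E i j (inr j) ->
  psi i j = \sum_k (side E i j (inl k))%:R * alpha k 0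
            - \sum_l (side E i j (inr l))%:R * beta l 0.
Proof.
move=> [rows [cols suppE]] jNi.
have edge_term k l : ((side E i j (inl k))%:R - (side E i j (inr l))%:R) * psi k l
                     = ((k == i) && (l == j))%:R * psi i j.
  case: (boolP ((k == i) && (l == j))) => [/andP [/eqP -> /eqP ->]|klNij].
    by rewrite (negbTE jNi) /side connect0 subr0 !mul1r.
  case: (boolP (E k l)) => [Ekl|nEkl]; last by rewrite suppE // mulr0 mul0r.
  have adj : gadj (remove_edge E i j) (inl k) (inr l) by rewrite /= /remove_edge Ekl klNij.
  by rewrite /side (same_connect1r (sym_connect_sym (gadj_sym _)) adj) subrr !mul0r.
under eq_bigr => k _ do rewrite -rows mulr_sumr.
under [X in _ - X]eq_bigr => l _ do rewrite -cols mulr_sumr.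
rewrite [X in _ - X]exchange_big -sumrB.
under eq_bigr => k _ do rewrite -sumrB.
under eq_bigr => k _ do under eq_bigr => l _ do rewrite -mulrBl edge_term.
rewrite (bigD1 i) //= [X in _ + X]big1 ?addr0 => [|k kNi]; last first.
  by rewrite big1 // => l _; rewrite (negbTE kNi) mul0r.
rewrite (bigD1 j) //= [X in _ + X]big1 ?addr0 => [|l lNj]; last first.
  by rewrite (negbTE lNj) andbF mul0r.
by rewrite !eqxx mul1r.
Qed.

Definition cut_coef (r : V) i j v : R := (side E i j v)%:R - (side E i j r)%:R.

Lemma isG_bridge_rooted r psi alpha beta i j :
  isG E alpha beta psi -> esum alpha = esum beta -> ~~ side E i j (inr j) ->
  psi i j = \sum_k cut_coef r i j (inl k) * alpha k 0 - \sum_l cut_coef r i j (inr l) * beta l 0.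
Proof.
move=> Gpsi balanced /(isG_bridge Gpsi) ->.
have shift n (a : 'I_n -> R) c (x : 'cV[R]_n) :
    \sum_k (a k - c) * x k 0 = \sum_k a k * x k 0 - c * esum x.
  by rewrite /esum mulr_sumr -sumrB; apply: eq_bigr => k _; rewrite mulrBl.
by rewrite /cut_coef !shift balanced; ring.
Qed.

End Flows.

Section Drift.
Variables (R : realFieldType) (nI nJ : nat) (E : 'I_nI -> 'I_nJ -> bool).
Implicit Types (x uc gam ell : 'cV[R]_nI) (us : 'cV[R]_nJ) (mu : 'M[R]_(nI, nJ)).

Lemma esumD n (x y : 'cV[R]_n) : esum (x + y) = esum x + esum y.
Proof. by rewrite /esum -big_split; apply: eq_bigr => k _; rewrite mxE. Qed.

Lemma esumZ n a (x : 'cV[R]_n) : esum (a *: x) = a * esum x.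
Proof. by rewrite /esum mulr_sumr; apply: eq_bigr => k _; rewrite mxE. Qed.

Lemma esumN n (x : 'cV[R]_n) : esum (- x) = - esum x.
Proof. by rewrite -scaleN1r esumZ mulN1r. Qed.

Lemma pospart_sub_negpart (a : R) : pospart a - negpart a = a.
Proof. by rewrite /pospart /negpart opprK addr_max_min addr0. Qed.

Lemma inU_pools_gt0 uc us : inU uc us -> (0 < nJ)%N.
Proof.
case: nJ us => // us [_ [_ [_]]]; rewrite /esum big_ord0 => /eqP.
by rewrite eq_sym oner_eq0.
Qed.

Lemma inU_balanced x uc us : inU uc us ->
  esum (x - pospart (esum x) *: uc) = esum (- (negpart (esum x) *: us)).
Proof.
move=> [_ [_ [uc1 us1]]]; have := pospart_sub_negpart (esum x).
by rewrite esumD !esumN !esumZ uc1 us1; lra.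
Qed.

Lemma Ghat_isG (r : 'I_nI + 'I_nJ) x uc us :
  (forall v w, connect (gadj E) v w) -> inU uc us ->
  isG E (x - pospart (esum x) *: uc) (- (negpart (esum x) *: us)) (Ghat E x uc us).
Proof.
move=> connE /(inU_balanced x) balanced.
by rewrite /Ghat /Gmat; apply: epsilon_spec; apply: (isG_exists r connE balanced).
Qed.

Lemma drift_outflow mu gam ell x uc us :
  drift E mu gam ell x uc us =
    - \col_i (\sum_(j | E i j) mu i j * Ghat E x uc us i j)
    - pospart (esum x) *: (diag_mx gam^T *m uc) + ell.
Proof. by apply/matrixP => i k; rewrite [k]ord1 mul_diag_mx !mxE; ring. Qed.

End Drift.

Section DriftMatrices.
Variables (R : realFieldType) (nI nJ : nat) (E : 'I_nI -> 'I_nJ -> bool).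
Variables (mu : 'M[R]_(nI, nJ)) (j0 : 'I_nJ).
Local Notation root := (inr j0 : 'I_nI + 'I_nJ).

Definition drift_B1 : 'M[R]_nI :=
  \matrix_(i, k) \sum_(j | E i j) mu i j * cut_coef R E root i j (inl k).

Definition drift_B2 : 'M[R]_(nI, nJ) :=
  \matrix_(i, l) - \sum_(j | E i j) mu i j * cut_coef R E root i j (inr l).

Lemma drift_B1_neq0 i k : drift_B1 i k != 0 -> inl k \in subtree E root i.
Proof.
apply: contraR => kNsub; rewrite mxE; apply/eqP/big1 => j _.
have /negPn/eqP same_side := contra (@side_neq_root_subtree _ _ E root i j (inl k)) kNsub.
by rewrite /cut_coef same_side subrr mulr0.
Qed.

Lemma drift_B1_lower_triangular : is_tree E ->
  exists sigma : {perm 'I_nI}, forall a b : 'I_nI, (a < b)%N -> drift_B1 (sigma a) (sigma b) = 0.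
Proof.
move=> treeE; have [sigma sorted_sigma] := exists_sorting_perm (fun k => #|subtree E root k|).
exists sigma => a b ab; apply/eqP; apply: contraT => /drift_B1_neq0 below_ab.
have ab_ne : sigma a != sigma b by rewrite (inj_eq perm_inj) -val_eqE /= (ltn_eqF ab).
have := card_subtree_lt treeE (isT : root != inl (sigma a)) ab_ne below_ab.
by rewrite ltnNge (sorted_sigma a b (ltnW ab)).
Qed.

Lemma drift_B1_diag_gt0 i : is_tree E -> (forall j, E i j -> 0 < mu i j) -> 0 < drift_B1 i i.
Proof.
move=> treeE mu_gt0; have [j Eij jNroot] := side_parent_edge treeE (isT : root != inl i).
have parent_term : 0 < mu i j * cut_coef R E root i j (inl i).
  by rewrite /cut_coef (negbTE jNroot) /side connect0 subr0 mulr1 mu_gt0.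
have other_terms : 0 <= \sum_(l | E i l && (l != j)) mu i l * cut_coef R E root i l (inl i).
  apply: sumr_ge0 => l /andP [Eil _]; apply: mulr_ge0; first exact/ltW/mu_gt0.
  by rewrite /cut_coef /side connect0 subr_ge0 ler_nat leq_b1.
by rewrite mxE (bigD1 j) //=; lra.
Qed.

Lemma isG_weighted_outflow psi alpha beta : is_tree E -> isG E alpha beta psi ->
  esum alpha = esum beta ->
  \col_i (\sum_(j | E i j) mu i j * psi i j) = drift_B1 *m alpha + drift_B2 *m beta.
Proof.
move=> [_ bridgeE] Gpsi balanced; apply/matrixP => i z; rewrite [z]ord1 !mxE.
have swap n (c : 'I_nJ -> 'I_n -> R) (y : 'cV[R]_n) :
    \sum_(j | E i j) mu i j * \sum_k c j k * y k 0
    = \sum_k (\sum_(j | E i j) mu i j * c j k) * y k 0.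
  under eq_bigr => j _ do rewrite mulr_sumr.
  rewrite exchange_big; apply: eq_bigr => k _; rewrite mulr_suml.
  by apply: eq_bigr => j _; rewrite mulrA.
under eq_bigr => j Eij do rewrite (isG_bridge_rooted root Gpsi balanced (bridgeE i j Eij)) mulrBr.
rewrite sumrB !swap -sumrN; congr (_ + _); apply: eq_bigr => l _;
  by rewrite /drift_B1 /drift_B2 mxE ?mulNr.
Qed.

Lemma drift_decomposition gam ell x uc us : is_tree E -> inU uc us ->
  drift E mu gam ell x uc us =
    - (drift_B1 *m (x - pospart (esum x) *: uc))
    + negpart (esum x) *: (drift_B2 *m us)
    - pospart (esum x) *: (diag_mx gam^T *m uc) + ell.
Proof.
move=> treeE Uu; have [connE _] := treeE.
rewrite drift_outflow (isG_weighted_outflow treeE (Ghat_isG root x connE Uu) (inU_balanced x Uu)).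
by rewrite mulmxN -scalemxAr opprD opprK.
Qed.

End DriftMatrices.

Theorem mainTheorem5 (R : realFieldType) (nI nJ : nat)
  (E : 'I_nI -> 'I_nJ -> bool) (lam gam ell : 'cV[R]_nI) (mu : 'M[R]_(nI, nJ)) :
  is_tree E ->
  (forall i, 0 < lam i 0) ->
  (forall i, 0 <= gam i 0) ->
  (forall i j, E i j -> 0 < mu i j) ->
  (forall i j, ~~ E i j -> mu i j = 0) ->
  exists (sigma : {perm 'I_nI}) (B1 : 'M[R]_nI) (B2 : 'M[R]_(nI, nJ)),
    (forall a b : 'I_nI, (a < b)%N -> B1 (sigma a) (sigma b) = 0) /\
    (forall i, 0 < B1 i i) /\
    (forall (x uc : 'cV[R]_nI) (us : 'cV[R]_nJ), inU uc us ->
       drift E mu gam ell x uc us =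
         - (B1 *m (x - pospart (esum x) *: uc))
         + negpart (esum x) *: (B2 *m us)
         - pospart (esum x) *: (diag_mx gam^T *m uc)
         + ell).
Proof.
move=> treeE _ _ mu_gt0 _.
have [nJ_gt0 | nJ_le0] := ltnP 0 nJ; last first.
  exists 1%g, 1%:M, 0; split; [|split].
  - by move=> a b ab; rewrite !perm1 mxE -val_eqE /= (ltn_eqF ab).
  - by move=> i; rewrite mxE eqxx ltr01.
  - by move=> x uc us /inU_pools_gt0; rewrite ltnNge nJ_le0.
pose j0 := Ordinal nJ_gt0.
have [sigma B1_triangular] := drift_B1_lower_triangular mu j0 treeE.
exists sigma, (drift_B1 E mu j0), (drift_B2 E mu j0); split=> //; split.
- by move=> i; apply: drift_B1_diag_gt0 => // j; apply: mu_gt0.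
- by move=> x uc us; apply: drift_decomposition.
Qed.
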